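(* Let $n\ge 3$, let $G$ be a group acting simply transitively by cube-complex automorphisms on a Cartesian product $\Delta$ of $n$ trees, and let $R \colon X^2 \to X^2$ be the map defined on the set $X$ of edge labels of the quotient cube complex $G\backslash\Delta$ by: $R(x_i,x_j) = (x_l^{-1},x_k^{-1})$ whenever $x_ix_jx_kx_l$ is the boundary label of a square of $G\backslash\Delta$, and $R(x_i,x_j)=(x_i,x_j)$ if $x_i,x_j$ do not appear next to each other in a square. Let $\tau \colon X^2 \to X^2$ be the flip map $\tau(x,y) = (y,x)$ and set $Q = \tau \circ R$. Then $Q$ satisfies the quantum Yang–Baxter equation $Q^{12}Q^{13}Q^{23} = Q^{23}Q^{13}Q^{12}$ on $X^3$.
   Context: For a map $Q \colon X^2 \to X^2$, $Q^{ij}$ denotes $Q$ acting on the $i$-th and $j$-th components of $X^3$ and the identity on the remaining component. Edges of the quotient cube complex are labelled by the elements of $G$ carrying the base vertex of $\Delta$ to the other endpoint of the corresponding lifted edge at the base vertex; reversing orientation inverts the label. *)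

From HB Require Import structures.
From mathcomp Require Import all_boot.

Set Implicit Arguments.
Unset Strict Implicit.
Unset Printing Implicit Defensive.

Local Open Scope group_scope.

Definition simple_graph (V : Type) (adj : V -> V -> Prop) : Prop :=
  (forall u v, adj u v -> adj v u) /\ (forall v, ~ adj v v).

Definition graph_connected (V : Type) (adj : V -> V -> Prop) : Prop :=
  forall u v : V, exists (k : nat) (p : nat -> V),
    p 0 = u /\ p k = v /\ (forall i, i < k -> adj (p i) (p i.+1)).

Definition has_cycle (V : Type) (adj : V -> V -> Prop) : Prop :=
  exists (k : nat) (c : nat -> V),
    3 <= k /\
    (forall i j, i < k -> j < k -> c i = c j -> i = j) /\
    (forall i, i.+1 < k -> adj (c i) (c i.+1)) /\
    adj (c k.-1) (c 0).

Definition is_tree (V : Type) (adj : V -> V -> Prop) : Prop :=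
  simple_graph adj /\ (exists v : V, True) /\ graph_connected adj /\ ~ has_cycle adj.

Section Product.
Variables (n : nat) (V : 'I_n -> Type) (adj : forall i : 'I_n, V i -> V i -> Prop).

Definition pvertex := forall i : 'I_n, V i.

Definition padj (p q : pvertex) : Prop :=
  exists i : 'I_n, adj (p i) (q i) /\ (forall k : 'I_n, k != i -> p k = q k).

(* squares of Delta (2-cubes e_i x e_j, i <> j), given by their corners
   p0, p1, p2, p3 in cyclic order along the boundary:
   p0 -> p1 moves coordinate i, p1 -> p2 moves coordinate j,
   p2 -> p3 moves coordinate i back, p3 -> p0 moves coordinate j back. *)
Definition psquare (p0 p1 p2 p3 : pvertex) : Prop :=
  exists i j : 'I_n, i != j /\
    (forall k : 'I_n, k != i -> k != j ->
        p0 k = p1 k /\ p1 k = p2 k /\ p2 k = p3 k) /\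
    p0 i = p3 i /\ p1 i = p2 i /\ adj (p0 i) (p1 i) /\
    p0 j = p1 j /\ p2 j = p3 j /\ adj (p1 j) (p2 j).

Variable G : groupType.
Variable act : G -> pvertex -> pvertex.

Definition is_action : Prop :=
  (forall v, act 1 v = v) /\ (forall g h v, act (g * h) v = act g (act h v)).

Definition acts_by_cube_automorphisms : Prop :=
  (forall g p q, padj (act g p) (act g q) <-> padj p q) /\
  (forall g p0 p1 p2 p3,
      psquare (act g p0) (act g p1) (act g p2) (act g p3) <-> psquare p0 p1 p2 p3).

Definition simply_transitive : Prop :=
  forall v w : pvertex, exists! g : G, act g v = w.

Variable v0 : pvertex.

(* X: the labels g of the edges at the base vertex, i.e. [v0, g v0] is an edge *)
Definition edge_label (g : G) : Prop := padj v0 (act g v0).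
Definition label_set := {g : G | edge_label g}.

(* x1 x2 x3 x4 is the boundary label of a square of G \ Delta: the lift of the
   boundary path starting at v0, i.e. v0, x1 v0, x1x2 v0, x1x2x3 v0, is the
   boundary of a square of Delta, and the path closes up: x1 x2 x3 x4 = 1. *)
Definition square_label (x1 x2 x3 x4 : G) : Prop :=
  psquare v0 (act x1 v0) (act (x1 * x2) v0) (act (x1 * x2 * x3) v0) /\
  x1 * x2 * x3 * x4 = 1.

Definition is_square_map (R : (label_set * label_set)%type -> (label_set * label_set)%type) : Prop :=
  (forall xi xj xk xl : label_set,
      square_label (proj1_sig xi) (proj1_sig xj) (proj1_sig xk) (proj1_sig xl) ->
      proj1_sig (R (xi, xj)).1 = (proj1_sig xl)^-1 /\ proj1_sig (R (xi, xj)).2 = (proj1_sig xk)^-1) /\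
  (forall xi xj : label_set,
      ~ (exists xk xl : label_set, square_label (proj1_sig xi) (proj1_sig xj) (proj1_sig xk) (proj1_sig xl)) ->
      R (xi, xj) = (xi, xj)).

End Product.

Definition flip (X : Type) (p : (X * X)%type) : (X * X)%type := (p.2, p.1).

Section YB.
Variables (X : Type) (Q : (X * X)%type -> (X * X)%type).
Definition Q12 (t : (X * X * X)%type) : (X * X * X)%type :=
  let: (x, y, z) := t in let: (a, b) := Q (x, y) in (a, b, z).
Definition Q13 (t : (X * X * X)%type) : (X * X * X)%type :=
  let: (x, y, z) := t in let: (a, c) := Q (x, z) in (a, y, c).
Definition Q23 (t : (X * X * X)%type) : (X * X * X)%type :=
  let: (x, y, z) := t in let: (b, c) := Q (y, z) in (x, b, c).

Definition quantum_YBE : Prop :=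
  forall t : (X * X * X)%type, Q12 (Q13 (Q23 t)) = Q23 (Q13 (Q12 t)).
End YB.

(* Lift a triple of labels (x, y, z) to the edge path v0, x v0, xy v0, xyz v0 of the
   product of trees; by simple transitivity the lift is injective.  R acting on two
   consecutive labels keeps the endpoints of their subpath and replaces its middle
   vertex by the opposite corner of the square it spans (or leaves it when the two
   edges move the same coordinate, hence span no square).  Three consecutive edges
   move coordinates a, b, c; when these are distinct they span a cube, and both
   R^{12}R^{23}R^{12} and R^{23}R^{12}R^{23} send the path to the same path around
   that cube, while repeated coordinates degenerate the cube.  Hence R satisfies the
   braid relation, which is equivalent to the Yang-Baxter equation for Q = flip o R. *)

From HB Require Import structures.
From mathcomp Require Import all_boot.
From Stdlib Require Import Classical FunctionalExtensionality ProofIrrelevance.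

Set Implicit Arguments.
Unset Strict Implicit.
Unset Printing Implicit Defensive.

Definition braid_relation (X : Type) (R : X * X -> X * X) : Prop :=
  forall t, Q12 R (Q23 R (Q12 R t)) = Q23 R (Q12 R (Q23 R t)).

Lemma quantum_YBE_flip (X : Type) (R : X * X -> X * X) :
  braid_relation R -> quantum_YBE (fun p => flip (R p)).
Proof.
move=> braidR [[x y] z]; have := braidR (x, y, z).
rewrite /Q12 /Q13 /Q23 /flip /=.
do 6 case: (R (_, _)) => ? ? /=.
by case=> -> -> ->.
Qed.

Section ProductGraph.
Variables (n : nat) (V : 'I_n -> Type) (adj : forall i : 'I_n, V i -> V i -> Prop).
Hypothesis adj_sym : forall i (u v : V i), adj u v -> adj v u.
Hypothesis adj_irrefl : forall i (v : V i), ~ adj v v.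

Definition coord_step (p q : pvertex V) (i : 'I_n) : Prop :=
  adj (p i) (q i) /\ (forall k, k != i -> p k = q k).

Definition corner (u w : pvertex V) (i : 'I_n) : pvertex V :=
  fun k => if k == i then u k else w k.

Definition opposite_corner (u m w m' : pvertex V) : Prop :=
  (~ (exists q, psquare adj u m w q) /\ m' = m) \/ psquare adj u m w m'.

Lemma coord_step_sym p q i : coord_step p q i -> coord_step q p i.
Proof. by move=> [A E]; split=> [|k /E]; [apply: adj_sym|]. Qed.

Lemma coord_step_inj p q i j : coord_step p q i -> coord_step p q j -> i = j.
Proof.
move=> [A _] [_ E]; case: (eqVneq i j) => // /E Epq.
by move: A; rewrite -Epq => /adj_irrefl.
Qed.

Lemma coord_stepE p q i k : coord_step p q i -> q k = if k == i then q k else p k.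
Proof. by move=> [_ E]; case: (eqVneq k i) => // /E. Qed.

Lemma corner_steps u m w i j : i != j -> coord_step u m i -> coord_step m w j ->
  coord_step u (corner u w i) j /\ coord_step (corner u w i) w i.
Proof.
move=> ij [Aum Eum] [Amw Emw]; rewrite /corner; split; split.
- by rewrite eq_sym (negbTE ij) Eum // eq_sym.
- by move=> k kj; case: (eqVneq k i) => // ki; rewrite Eum // Emw.
- by rewrite eqxx -(Emw _ ij).
- by move=> k /negbTE ->.
Qed.

Lemma psquareP p0 p1 p2 p3 : psquare adj p0 p1 p2 p3 <->
  exists i j, [/\ i != j, coord_step p0 p1 i, coord_step p1 p2 j & p3 = corner p0 p2 i].
Proof.
split=> [[i [j [ij [Eij [E03 [E12 [A01 [E01 [E23 A12]]]]]]]]]|[i [j [ij S01 S12 ->]]]].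
  have ji : j != i by rewrite eq_sym.
  exists i, j; split=> //.
  - split=> // k ki; case: (eqVneq k j) => [->|kj] //; by case: (Eij k ki kj).
  - split=> // k kj; case: (eqVneq k i) => [->|ki] //; by case: (Eij k ki kj) => _ [].
  apply: functional_extensionality_dep => k; rewrite /corner.
  case: (eqVneq k i) => [->|ki] //; case: (eqVneq k j) => [->|kj] //.
  by case: (Eij k ki kj) => _ [].
case: S01 S12 => [A01 E01] [A12 E12]; have ji : j != i by rewrite eq_sym.
exists i, j; rewrite /corner eqxx (negbTE ji); split=> //; split.
  by move=> k ki kj; rewrite (negbTE ki) E01 // E12.
by rewrite -(E12 _ ij) (E01 _ ji).
Qed.

Lemma opposite_corner_same u m w m' i :
  coord_step u m i -> coord_step m w i -> opposite_corner u m w m' -> m' = m.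
Proof.
move=> Sum Smw [[_ //]|/psquareP [i' [j' [ij Sum' Smw' _]]]].
by rewrite -(coord_step_inj Sum Sum') -(coord_step_inj Smw Smw') eqxx in ij.
Qed.

Lemma opposite_corner_diff u m w m' i j : i != j ->
  coord_step u m i -> coord_step m w j -> opposite_corner u m w m' -> m' = corner u w i.
Proof.
move=> ij Sum Smw [[noSq _]|/psquareP [i' [j' [_ Sum' _ ->]]]].
  by case: noSq; exists (corner u w i); apply/psquareP; exists i, j.
by rewrite -(coord_step_inj Sum Sum').
Qed.

Ltac resolve_corners :=
  repeat match goal with
  | ij : is_true (?i != ?j) |- _ =>
      lazymatch goal with
      | _ : is_true (j != i) |- _ => fail
      | _ => have ? : j != i by rewrite eq_sym
      end
  | N : opposite_corner ?u ?m ?w ?m', Sum : coord_step ?u ?m ?i,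
    Smw : coord_step ?m ?w ?i |- _ =>
      move: (opposite_corner_same Sum Smw N) => ?; subst m'; clear N
  | N : opposite_corner ?u ?m ?w ?m', Sum : coord_step ?u ?m ?i,
    Smw : coord_step ?m ?w ?j, ij : is_true (?i != ?j) |- _ =>
      have [? ?] := corner_steps ij Sum Smw;
      move: (opposite_corner_diff ij Sum Smw N) => ?; subst m'; clear N
  end.

Ltac decide_coord k :=
  repeat (rewrite ?eqxx; match goal with
  | ne : is_true (?x != ?y) |- context[?x == ?y] => rewrite (negbTE ne)
  | |- context[k == ?x] => case: (eqVneq k x) => [->|?]
  end).

Lemma opposite_corner_braid p0 p1 p2 p3 q1 q2 q2' r1 r2 r1' :
  padj adj p0 p1 -> padj adj p1 p2 -> padj adj p2 p3 ->
  opposite_corner p1 p2 p3 q2 -> opposite_corner p0 p1 q2 q1 -> opposite_corner q1 q2 p3 q2' ->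
  opposite_corner p0 p1 p2 r1 -> opposite_corner r1 p2 p3 r2 -> opposite_corner p0 r1 r2 r1' ->
  q1 = r1' /\ q2' = r2.
Proof.
move=> [a S01] [b S12] [c S23] N1 N2 N3 N4 N5 N6.
change (coord_step p0 p1 a) in S01; change (coord_step p1 p2 b) in S12;
change (coord_step p2 p3 c) in S23.
have [Eab|ab] := eqVneq a b; have [Eac|ac] := eqVneq a c; have [Ebc|bc] := eqVneq b c;
  subst; try match goal with H : is_true (?x != ?x) |- _ => by rewrite eqxx in H end.
all: resolve_corners; split=> //.
all: apply: functional_extensionality_dep => k; rewrite /corner.
all: move: (coord_stepE k S01) (coord_stepE k S12) (coord_stepE k S23).
all: decide_coord k; congruence.
Qed.
End ProductGraph.

Section SquareMap.
Local Open Scope group_scope.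
Variables (n : nat) (V : 'I_n -> Type) (adj : forall i : 'I_n, V i -> V i -> Prop).
Hypothesis adj_sym : forall i (u v : V i), adj u v -> adj v u.
Hypothesis adj_irrefl : forall i (v : V i), ~ adj v v.
Variables (G : groupType) (act : G -> pvertex V -> pvertex V) (v0 : pvertex V).
Hypothesis act_action : is_action act.
Hypothesis act_aut : acts_by_cube_automorphisms adj act.
Hypothesis act_regular : simply_transitive act.

Local Notation L := (label_set adj act v0).
Local Notation vtx g := (act g v0).

Lemma act1 v : act 1 v = v.
Proof. exact: act_action.1. Qed.

Lemma actM g h v : act (g * h) v = act g (act h v).
Proof. exact: act_action.2. Qed.

Lemma actKV g v : act g (act g^-1 v) = v.
Proof. by rewrite -actM mulgV act1. Qed.

Lemma vtx_inj g h : vtx g = vtx h -> g = h.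
Proof.
move=> E; have [g' [_ uniq_g']] := act_regular v0 (vtx g).
by rewrite -(uniq_g' g erefl) -(uniq_g' h (esym E)).
Qed.

Lemma label_inj (x y : L) : sval x = sval y -> x = y.
Proof. by apply: eq_sig_hprop => *; apply: proof_irrelevance. Qed.

Lemma padj_act g p q : padj adj p q -> padj adj (act g p) (act g q).
Proof. exact: (act_aut.1 g p q).2. Qed.

Lemma padj_label g (x : L) : padj adj (vtx g) (vtx (g * sval x)).
Proof. by rewrite actM; apply: padj_act; case: x. Qed.

Lemma opposite_corner_act g u m w m' : opposite_corner adj u m w m' ->
  opposite_corner adj (act g u) (act g m) (act g w) (act g m').
Proof.
have psquare_act := act_aut.2 g.
case=> [[noSq ->]|sq]; [left; split=> // | right; exact/psquare_act].
move=> [q sq]; apply: noSq; exists (act g^-1 q); apply/(psquare_act _ _ _ _).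
by rewrite actKV.
Qed.

Variable R : L * L -> L * L.
Hypothesis R_square : is_square_map R.

Lemma square_map_spec g (x y a b : L) : R (x, y) = (a, b) ->
  sval a * sval b = sval x * sval y /\
  opposite_corner adj (vtx g) (vtx (g * sval x)) (vtx (g * sval x * sval y))
    (vtx (g * sval a)).
Proof.
move=> Rxy; suff [-> corner_v0] : sval a * sval b = sval x * sval y /\
    opposite_corner adj v0 (vtx (sval x)) (vtx (sval x * sval y)) (vtx (sval a)).
  by split=> //; have := opposite_corner_act g corner_v0; rewrite -!actM mulgA.
set xy := sval x * sval y.
have [[q sq] | noSq] := classic (exists q, psquare adj v0 (vtx (sval x)) (vtx xy) q); last first.
  have noLabel : ~ exists xk xl : L,
      square_label adj act v0 (sval x) (sval y) (sval xk) (sval xl).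
    by move=> [xk [xl [sq _]]]; apply: noSq; eexists; exact: sq.
  by move: Rxy; rewrite (R_square.2 x y noLabel) => -[<- <-]; split=> //; left.
have [h [hq _]] := act_regular v0 q; subst q.
have [i [j [ij S01 S12 Eh]]] := (psquareP adj _ _ _ _).1 sq.
have [S03 S32] := corner_steps ij S01 S12; rewrite -Eh in S03 S32.
(* The square v0, x v0, xy v0, h v0 has boundary label x, y, xy^-1 h, h^-1. *)
have Lk : edge_label adj act v0 (xy^-1 * h).
  rewrite /edge_label actM -{1}(actKV xy^-1 v0) invgK; apply: padj_act.
  by exists i; exact: coord_step_sym.
have Ll : edge_label adj act v0 h^-1.
  rewrite /edge_label -{1}(actKV h^-1 v0) invgK; apply: padj_act.
  by exists j; exact: coord_step_sym.
have sqLabel : square_label adj act v0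
    (sval x) (sval y) (sval (exist _ _ Lk)) (sval (exist _ _ Ll)).
  by rewrite /square_label /= -/xy mulVKg mulgV.
have := R_square.1 x y _ _ sqLabel; rewrite Rxy /= => -[-> ->].
rewrite invgK invgM invgK mulVKg.
by split=> //; right.
Qed.

Lemma label_triple_eq (x y z x' y' z' : L) :
  vtx (sval x) = vtx (sval x') -> vtx (sval x * sval y) = vtx (sval x' * sval y') ->
  sval x * sval y * sval z = sval x' * sval y' * sval z' -> (x, y, z) = (x', y', z').
Proof.
move=> /vtx_inj Ex /vtx_inj Exy Exyz.
have Ey : sval y = sval y' by apply: (mulgI (sval x)); rewrite Exy Ex.
have Ez : sval z = sval z' by apply: (mulgI (sval x * sval y)); rewrite Exyz Exy.
by rewrite (label_inj Ex) (label_inj Ey) (label_inj Ez).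
Qed.

Lemma square_map_braid : braid_relation R.
Proof.
move=> [[x y] z]; rewrite /Q12 /Q23.
case Exy: (R (x, y)) => [a1 b1]; case Eb1z: (R (b1, z)) => [b2 c2].
case Ea1b2: (R (a1, b2)) => [a3 b3].
case Eyz: (R (y, z)) => [e1 f1]; case Exe1: (R (x, e1)) => [d2 e2].
case Ee2f1: (R (e2, f1)) => [e3 f3].
have [Pxy Cxy] := square_map_spec 1 Exy; have [Pb1z Cb1z] := square_map_spec (sval a1) Eb1z.
have [Pa1b2 Ca1b2] := square_map_spec 1 Ea1b2; have [Pyz Cyz] := square_map_spec (sval x) Eyz.
have [Pxe1 Cxe1] := square_map_spec 1 Exe1; have [Pe2f1 Ce2f1] := square_map_spec (sval d2) Ee2f1.
rewrite !mul1g act1 in Cxy Ca1b2 Cxe1.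
rewrite Pxy in Cb1z; rewrite Pxe1 -mulgA Pyz mulgA in Ce2f1.
have [Ed2 Ed2e3] := opposite_corner_braid adj_irrefl (svalP x) (padj_label _ y)
  (padj_label _ z) Cyz Cxe1 Ce2f1 Cxy Cb1z Ca1b2.
apply: label_triple_eq; first by rewrite Ed2.
  by rewrite Pa1b2 Ed2e3.
by rewrite Pa1b2 -!mulgA Pb1z Pe2f1 !mulgA Pxy Pxe1 -!mulgA Pyz.
Qed.
End SquareMap.

Unset Implicit Arguments.
Set Strict Implicit.

Theorem corollary1
  (n : nat) (hn : 3 <= n)
  (V : 'I_n -> Type) (adj : forall i : 'I_n, V i -> V i -> Prop)
  (Htree : forall i : 'I_n, is_tree (adj i))
  (G : groupType) (act : G -> pvertex V -> pvertex V)
  (Hact : is_action act)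
  (Haut : acts_by_cube_automorphisms adj act)
  (Hst : simply_transitive act)
  (v0 : pvertex V)
  (R : label_set adj act v0 * label_set adj act v0 ->
       label_set adj act v0 * label_set adj act v0)
  (HR : is_square_map R) :
  quantum_YBE (fun p => flip (R p)).
Proof.
have adj_sym i : forall u v : V i, adj i u v -> adj i v u := (Htree i).1.1.
have adj_irrefl i : forall v : V i, ~ adj i v v := (Htree i).1.2.
apply: quantum_YBE_flip.
exact: (square_map_braid adj_sym adj_irrefl Hact Haut Hst HR).
Qed.
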